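(* Let $n=p_1^{\alpha_1}\cdots p_r^{\alpha_r}$ be the canonical factorization of $n$ into distinct primes and let $d=p_1^{\beta_1}\cdots p_r^{\beta_r}$ be a square-free divisor of $n$ (i.e. $0\le\beta_\ell\le1$ for all $\ell$). Then $c_d(k)\neq0$ for every divisor $k$ of $n$, and for $s=0,1,2,\dots$, $$\sum_{k\mid n}\frac{1}{\big(c_d(k)\big)^s}=\prod_{\ell=1}^r\Big(\frac{\alpha_\ell}{(p_\ell-1)^{\beta_\ell s}}+(-1)^{\beta_\ell s}\Big).$$
   Context: For integers $m\ge1$ and $x$, $c_m(x)=\sum_{1\le j\le m,\ (j,m)=1}e^{2\pi ijx/m}$ is the Ramanujan sum; the sum is over positive divisors $k$ of $n$. *)

From Stdlib Require Import Reals.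
From HB Require Import structures.
From mathcomp Require Import all_boot all_order all_algebra.
From mathcomp Require Import complex.
From mathcomp Require Import Rstruct.
Set Implicit Arguments. Unset Strict Implicit. Unset Printing Implicit Defensive.
Import Order.TTheory GRing.Theory Num.Theory.
Local Open Scope ring_scope.
Local Open Scope complex_scope.

Definition expi (t : R) : R[i] := (Rtrigo_def.cos t +i* Rtrigo_def.sin t)%C.

Definition ramanujan_sum (m : nat) (x : int) : R[i] :=
  \sum_(1 <= j < m.+1 | coprime j m)
     expi (2 * PI * ((j%:R * x%:~R) / m%:R)).

(** c_d(k) = S_d(z^k), where z is a primitive d-th root of unity and S_m(w) is
    the sum of the w^j over the residues j coprime to m.  For p prime not
    dividing m, the residues coprime to p m are those coprime to m, repeated p
    times, minus the multiples of p, so S_(pm)(w) = (sum_(i<p) w^(m i)) S_m(w) -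
    S_m(w^p).  For w = z^k the geometric sum is p or 0 according as p | k, and
    z^p is a primitive m-th root, so by induction c_d(k), for squarefree d, is
    the product over the primes p | d of p - 1 if p | k and -1 otherwise; in
    particular it does not vanish.  Hence for k | n, c_d(k)^-s only depends on
    which exponents of k are positive, and its sum over the divisors of n
    factors over the primes of n. *)

From Stdlib Require Import Rdefinitions RIneq Rtrigo1 Lra.
From HB Require Import structures.
From mathcomp Require Import all_boot all_order all_algebra.
From mathcomp Require Import complex Rstruct.
Import Order.TTheory GRing.Theory Num.Theory.

Set Implicit Arguments.
Unset Strict Implicit.
Unset Printing Implicit Defensive.

Definition squarefree (n : nat) : Prop := forall p, logn p n <= 1.

Lemma squarefree_dvdn m n : 0 < n -> m %| n -> squarefree n -> squarefree m.
Proof. by move=> n_gt0 m_n sq_n p; apply: leq_trans (sq_n p); apply: dvdn_leq_log. Qed.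

Lemma squarefree_primeM p m : prime p -> 0 < m -> squarefree (p * m) -> ~~ (p %| m).
Proof.
move=> p_pr m_gt0 /(_ p); rewrite lognM ?(prime_gt0 p_pr) // logn_prime // eqxx.
by apply: contraTN => p_m; rewrite add1n ltnS -ltnNge logn_gt0 mem_primes p_pr m_gt0 p_m.
Qed.

Lemma logn_squarefree n q : squarefree n -> logn q n = (q \in primes n).
Proof. by move/(_ q); rewrite -logn_gt0; case: (logn q n) => [|[]]. Qed.

Lemma perm_primes_pfactorM p a m : prime p -> 0 < a -> 0 < m -> ~~ (p %| m) ->
  perm_eq (primes (p ^ a * m)) (p :: primes m).
Proof.
move=> p_pr a_gt0 m_gt0 p_m; apply: uniq_perm; rewrite ?primes_uniq //=.
  by rewrite primes_uniq mem_primes (negbTE p_m) !andbF.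
move=> q; rewrite primesM ?expn_gt0 ?(prime_gt0 p_pr) //.
by rewrite primesX // (primes_prime p_pr) mem_seq1 in_cons.
Qed.

Lemma logn_pfactorM q p e m : prime p -> 0 < m -> ~~ (p %| m) ->
  logn q (p ^ e * m) = if q == p then e else logn q m.
Proof.
move=> p_pr m_gt0 p_m; rewrite lognM ?expn_gt0 ?(prime_gt0 p_pr) //.
rewrite lognX logn_prime //; have [->|_] := eqVneq q p; last by rewrite muln0.
by rewrite logn_coprime ?prime_coprime // muln1 addn0.
Qed.

Lemma gcdn_dvdnM_coprime a b x y : coprime a b -> x %| a -> y %| b ->
  gcdn a (x * y) = x.
Proof.
by move=> co_ab x_a y_b; rewrite Gauss_gcdl ?(coprime_dvdr y_b) //; apply/gcdn_idPr.
Qed.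

Lemma perm_divisors_coprimeM a b : 0 < a -> 0 < b -> coprime a b ->
  perm_eq (divisors (a * b)) [seq x * y | x <- divisors a, y <- divisors b].
Proof.
move=> a_gt0 b_gt0 co_ab; have ab_gt0 : 0 < a * b by rewrite muln_gt0 a_gt0.
have co_ba : coprime b a by rewrite coprime_sym.
apply: uniq_perm; rewrite ?divisors_uniq //.
  rewrite allpairs_uniq ?divisors_uniq // => -[x y] [x' y'] /=.
  move=> /allpairsP[[x1 y1] /= [+ + [-> ->]]] /allpairsP[[x2 y2] /= [+ + [-> ->]]].
  rewrite -!dvdn_divisors // => x1_a y1_b x2_a y2_b /= eq_xy; congr (_, _).
    by rewrite -(gcdn_dvdnM_coprime co_ab x1_a y1_b) eq_xy (gcdn_dvdnM_coprime co_ab).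
  rewrite -(gcdn_dvdnM_coprime co_ba y1_b x1_a) mulnC eq_xy.
  by rewrite mulnC (gcdn_dvdnM_coprime co_ba).
move=> k; rewrite -dvdn_divisors //; apply/idP/allpairsP => [k_ab|].
  exists (gcdn k a, gcdn k b); rewrite /= -!dvdn_divisors // !dvdn_gcdr.
  split=> //; apply/eqP; rewrite eqn_dvd; apply/andP; split.
    by rewrite muln_gcdl dvdn_gcd dvdn_mulr // muln_gcdr dvdn_gcd k_ab dvdn_mull.
  have co_gcd : coprime (gcdn k a) (gcdn k b).
    exact: coprime_dvdl (dvdn_gcdr _ _) (coprime_dvdr (dvdn_gcdr _ _) co_ab).
  by rewrite Gauss_dvd // !dvdn_gcdl.
by move=> [[x y] /= [+ + ->]]; rewrite -!dvdn_divisors //; apply: dvdn_mul.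
Qed.

Lemma perm_divisors_pfactor p a : prime p ->
  perm_eq (divisors (p ^ a)) [seq p ^ e | e <- iota 0 a.+1].
Proof.
move=> p_pr; apply: uniq_perm; rewrite ?divisors_uniq //.
  by rewrite map_inj_uniq ?iota_uniq //; apply: expnI; rewrite prime_gt1.
move=> k; rewrite -dvdn_divisors ?expn_gt0 ?(prime_gt0 p_pr) //.
apply/(dvdn_pfactor _ _ p_pr)/mapP => -[e e_a ->]; exists e => //.
  by rewrite mem_iota.
by move: e_a; rewrite mem_iota.
Qed.

Local Open Scope ring_scope.

Lemma sum_divisors_prod_logn (R : comPzSemiRingType) (h : nat -> nat -> R) n :
  (0 < n)%N ->
  \sum_(k <- divisors n) \prod_(q <- primes n) h q (logn q k) =
  \prod_(q <- primes n) \sum_(e < (logn q n).+1) h q e.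
Proof.
elim/ltn_ind: n => n IHn n_gt0; have [n_le1|n_gt1] := leqP n 1.
  have -> : n = 1%N by apply/eqP; rewrite eqn_leq n_le1.
  by rewrite /= big_cons !big_nil addr0.
pose p := pdiv n; have p_pr : prime p by apply: pdiv_prime.
have [m co_pm def_n] := pfactor_coprime p_pr n_gt0; set a := logn p n in def_n.
have m_gt0 : (0 < m)%N by move: n_gt0; rewrite def_n muln_gt0 => /andP[].
have a_gt0 : (0 < a)%N by rewrite logn_gt0 mem_primes p_pr n_gt0 pdiv_dvd.
have p_m : ~~ (p %| m)%N by rewrite -prime_coprime.
have m_lt_n : (m < n)%N by rewrite def_n ltn_Pmulr // -(expn0 p) ltn_exp2l ?prime_gt1.
have primes_n := perm_primes_pfactorM p_pr a_gt0 m_gt0 p_m.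
have q_neq_p q : q \in primes m -> (q == p) = false.
  by apply: contraTF => /eqP ->; rewrite mem_primes (negbTE p_m) !andbF.
have logn_pM e y q : (y %| m)%N -> logn q (p ^ e * y) = if q == p then e else logn q y.
  move=> y_m; apply: logn_pfactorM; rewrite ?(dvdn_gt0 m_gt0 y_m) //.
  by apply: contra p_m => /dvdn_trans; apply.
rewrite def_n mulnC [RHS](perm_big _ primes_n) big_cons /= (logn_pM a m p) // eqxx.
rewrite [X in _ = _ X](eq_big_seq (fun q => \sum_(e < (logn q m).+1) h q e)); last first.
  by move=> q q_m; rewrite (logn_pM a m q) // q_neq_p.
rewrite -(IHn m m_lt_n m_gt0) mulr_suml.
rewrite (perm_big _ (perm_divisors_coprimeM _ m_gt0 _)); last first.
- by rewrite coprime_pexpl.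
- by rewrite expn_gt0 prime_gt0.
rewrite big_allpairs_dep (perm_big _ (perm_divisors_pfactor a p_pr)) big_map.
rewrite -[iota 0 a.+1]/(index_iota 0 a.+1) big_mkord; apply: eq_bigr => e _.
rewrite mulr_sumr; apply: eq_big_seq => y; rewrite -dvdn_divisors // => y_m.
rewrite (perm_big _ primes_n) big_cons (logn_pM e y p) // eqxx.
by congr (_ * _); apply: eq_big_seq => q q_m; rewrite (logn_pM e y q) // q_neq_p.
Qed.

Lemma sum_nat_dvdn (V : nmodType) p c (F : nat -> V) (P : pred nat) : (0 < p)%N ->
  \sum_(0 <= j < p * c | P j && (p %| j)%N) F j =
  \sum_(0 <= t < c | P (p * t)%N) F (p * t)%N.
Proof.
move=> p_gt0; elim: c => [|c IHc]; first by rewrite muln0 !big_geq.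
rewrite mulnSr (@big_cat_nat _ _ _ (p * c)) ?leq_addr //= IHc.
rewrite [RHS]big_mkcond big_nat_recr //= -big_mkcond; congr (_ + _).
rewrite -{1}[(p * c)%N]add0n big_addn addKn big_mkcond big_ltn // add0n.
rewrite dvdn_mulr // andbT big_nat_cond big1 /= ?addr0 // => i.
by case/andP=> /andP[i_gt0 i_lt_p] _; rewrite dvdn_addl ?dvdn_mulr // gtnNdvd ?andbF.
Qed.

Definition coprime_pow_sum (R : pzSemiRingType) (m : nat) (z : R) : R :=
  \sum_(0 <= j < m | coprime j m) z ^+ j.

Lemma coprime_pow_sum_unity_root (R : pzSemiRingType) m (z : R) :
  (0 < m)%N -> z ^+ m = 1 ->
  coprime_pow_sum m z = \sum_(1 <= j < m.+1 | coprime j m) z ^+ j.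
Proof.
move=> m_gt0 z_m; rewrite /coprime_pow_sum big_mkcond [RHS]big_mkcond.
rewrite [LHS]big_ltn // [RHS]big_nat_recr //=.
by rewrite /coprime gcdnn gcd0n expr0 z_m addrC.
Qed.

Section CoprimePowSumRing.

Variable R : pzRingType.
Implicit Types z : R.

Lemma sum_coprime_pow_mulnl c m z :
  \sum_(0 <= j < c * m | coprime j m) z ^+ j =
  (\sum_(i < c) z ^+ (i * m)) * coprime_pow_sum m z.
Proof.
elim: c => [|c IHc]; first by rewrite big_geq // big_ord0 mul0r.
rewrite mulSnr (@big_cat_nat _ _ _ (c * m)) ?leq_addr //= IHc.
rewrite -{1}[(c * m)%N]add0n big_addn addKn big_ord_recr /= mulrDl; congr (_ + _).
rewrite mulr_sumr; under eq_bigl => j do rewrite -coprime_modl addnC modnMDl coprime_modl.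
by apply: eq_bigr => j _; rewrite addnC exprD.
Qed.

Lemma coprime_pow_sum_primeM p m z : prime p -> coprime p m ->
  coprime_pow_sum (p * m) z =
  (\sum_(i < p) z ^+ (i * m)) * coprime_pow_sum m z - coprime_pow_sum m (z ^+ p).
Proof.
move=> p_pr co_pm; rewrite -sum_coprime_pow_mulnl /coprime_pow_sum.
have -> : \sum_(0 <= j < p * m | coprime j (p * m)) z ^+ j =
    \sum_(0 <= j < p * m | coprime j m) z ^+ j -
    \sum_(0 <= j < p * m | coprime j m && (p %| j)%N) z ^+ j.
  rewrite [X in _ = X - _]big_mkcond [X in _ = _ - X]big_mkcond -sumrB big_mkcond.
  apply: eq_bigr => j _; rewrite coprimeMr [coprime j p]coprime_sym prime_coprime //.
  by case: (coprime j m); case: (p %| j)%N; rewrite ?subrr ?subr0.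
rewrite sum_nat_dvdn ?prime_gt0 //; congr (_ - _).
by under eq_bigl do rewrite coprimeMl co_pm; apply: eq_bigr => t _; rewrite exprM.
Qed.

End CoprimePowSumRing.

Lemma sum_unity_root_eq0 (F : idomainType) n (u : F) :
  (0 < n)%N -> u ^+ n = 1 -> u != 1 -> \sum_(i < n) u ^+ i = 0.
Proof.
move=> n_gt0 u_n u_neq1; apply/eqP; have := expfS_eq1 u n.-1.
by rewrite prednK // u_n eqxx (negbTE u_neq1).
Qed.

Lemma coprime_pow_sum_prim_root (F : idomainType) m (z : F) k :
  m.-primitive_root z -> squarefree m ->
  coprime_pow_sum m (z ^+ k) =
  \prod_(q <- primes m) (if (q %| k)%N then (q - 1)%:R else -1).
Proof.
elim/ltn_ind: m z k => m IHm z k prim_z sq_m.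
have m_gt0 := prim_order_gt0 prim_z; have [m_le1|m_gt1] := leqP m 1.
  have -> : m = 1%N by apply/eqP; rewrite eqn_leq m_le1.
  by rewrite /coprime_pow_sum big_mkcond big_nat1 big_nil.
pose p := pdiv m; have p_pr : prime p by apply: pdiv_prime.
have def_m : m = (p * (m %/ p))%N by rewrite mulnC divnK ?pdiv_dvd.
set m' := (m %/ p)%N in def_m.
have m'_gt0 : (0 < m')%N by move: m_gt0; rewrite def_m muln_gt0 => /andP[].
have p_m' : ~~ (p %| m')%N by apply: squarefree_primeM; rewrite -?def_m.
have sq_m' : squarefree m' by apply: squarefree_dvdn sq_m; rewrite // def_m dvdn_mull.
have m'_lt_m : (m' < m)%N by rewrite ltn_Pdiv ?prime_gt1.
have prim_zp : m'.-primitive_root (z ^+ p).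
  by have := exp_prim_root prim_z p; rewrite (gcdn_idPl (pdiv_dvd m)).
have IH := IHm m' m'_lt_m (z ^+ p) _ prim_zp sq_m'.
rewrite def_m coprime_pow_sum_primeM ?prime_coprime // [z ^+ k ^+ p]exprAC IH.
rewrite -[p]expn1 (perm_big _ (perm_primes_pfactorM _ _ _ _)) //= big_cons expn1.
under eq_bigr => i _ do rewrite -exprM mulnCA mulnC exprM.
have [p_k|p_k] := boolP (p %| k)%N.
  have z_km' : z ^+ (k * m') = 1.
    by apply/eqP; rewrite -(prim_order_dvd prim_z) def_m dvdn_mul.
  rewrite z_km'; under eq_bigr do rewrite expr1n.
  rewrite sumr_const card_ord -[k in z ^+ k](divnK p_k) [(_ * p)%N]mulnC exprM IH.
  rewrite natrB ?prime_gt0 // mulrBl mul1r; congr (_ * _ - _).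
  apply: eq_big_seq => q; rewrite mem_primes => /and3P[q_pr _ q_m'].
  rewrite -{2}(divnK p_k) Gauss_dvdl // prime_coprime // dvdn_prime2 //.
  by apply: (contraNneq _ p_m') => <-.
rewrite sum_unity_root_eq0 ?prime_gt0 ?mul0r ?sub0r ?mulN1r //.
  apply/eqP; rewrite -exprM -(prim_order_dvd prim_z) def_m [(_ * p)%N]mulnC.
  by rewrite dvdn_pmul2l ?prime_gt0 // dvdn_mull.
by rewrite -(prim_order_dvd prim_z) def_m dvdn_pmul2r.
Qed.

Lemma prod_primes_squarefree (R : comPzSemiRingType) (F : nat -> R) d n :
  (0 < n)%N -> (d %| n)%N -> squarefree d ->
  \prod_(q <- primes d) F q = \prod_(q <- primes n) F q ^+ logn q d.
Proof.
move=> n_gt0 d_n sq_d; have d_gt0 := dvdn_gt0 n_gt0 d_n.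
have primes_d : perm_eq (primes d) [seq q <- primes n | q \in primes d].
  apply: uniq_perm; rewrite ?filter_uniq ?primes_uniq // => q.
  rewrite mem_filter andb_idr // !mem_primes n_gt0 => /and3P[-> _ q_d].
  exact: dvdn_trans q_d d_n.
rewrite (perm_big _ primes_d) big_filter big_mkcond; apply: eq_bigr => q _.
by rewrite logn_squarefree //; case: (q \in primes d).
Qed.

Lemma sum_ord_inv_expr_posN1 (F : fieldType) (x : F) a t :
  \sum_(e < a.+1) ((if (0 < e)%N then x else -1) ^+ t)^-1 = a%:R / x ^+ t + (-1) ^+ t.
Proof.
by rewrite big_ord_recl /= addrC sumr_const card_ord mulr_natl -!exprVn invrN1.
Qed.

Definition expi2pi (x : R) : R[i] := expi (2 * PI * x).

Lemma expiD (a b : R) : expi (a + b) = expi a * expi b.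
Proof. by rewrite /expi /=; congr Complex; rewrite ?cos_plus // sin_plus addrC. Qed.

Lemma expi2piD x y : expi2pi (x + y) = expi2pi x * expi2pi y.
Proof. by rewrite /expi2pi RmultE mulrDr expiD. Qed.

Lemma expi2piMn x n : expi2pi (x *+ n) = expi2pi x ^+ n.
Proof.
elim: n => [|n IHn]; last by rewrite mulrS expi2piD IHn exprS.
by rewrite mulr0n /expi2pi RmultE mulr0 /expi cos_0 sin_0.
Qed.

Lemma expi2pi1 : expi2pi 1 = 1.
Proof. by rewrite /expi2pi RmultE mulr1 /expi cos_2PI sin_2PI. Qed.

Lemma expi2pi_neq1 x : 0 < x < 1 -> expi2pi x != 1.
Proof.
rewrite -R0E -R1E => /andP[/RltP x_gt0 /RltP x_lt1].
have sin_gt0 : Rlt 0 (sin (PI * x)) by apply: sin_gt_0; have := PI_RGT_0; nra.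
by apply/eqP => /(congr1 (@complex.Re R)); rewrite /= Rmult_assoc cos_2a_sin -R1E; nra.
Qed.

Lemma prim_root_expi2pi m : (0 < m)%N -> m.-primitive_root (expi2pi m%:R^-1).
Proof.
move=> m_gt0; apply/andP; split=> //; apply/forallP => i.
rewrite unity_rootE -expi2piMn -[_ *+ i.+1]mulr_natr mulrC.
have m_neq0 : m%:R != 0 :> R by rewrite pnatr_eq0 -lt0n.
have [->|i_neq_m] := eqVneq i.+1 m; first by rewrite mulfV // expi2pi1 !eqxx.
rewrite (negbTE (expi2pi_neq1 _)) //= divr_gt0 ?ltr0n // ltr_pdivrMr ?ltr0n //.
by rewrite mul1r ltr_nat ltn_neqAle i_neq_m ltn_ord.
Qed.

Lemma ramanujan_sum_coprime_pow_sum m (k : nat) : (0 < m)%N ->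
  ramanujan_sum m k = coprime_pow_sum m (expi2pi m%:R^-1 ^+ k).
Proof.
move=> m_gt0; have prim_z := prim_root_expi2pi m_gt0.
rewrite coprime_pow_sum_unity_root //; last by rewrite exprAC (prim_expr_order prim_z) expr1n.
apply: eq_bigr => j _; rewrite -exprM mulnC -expi2piMn /expi2pi.
by congr (expi (Rmult _ _)); rewrite RdivE RmultE -[_%:~R]/(k%:R) -natrM mulrC mulr_natr.
Qed.

Lemma ramanujan_sum_squarefree d (k : nat) : (0 < d)%N -> squarefree d ->
  ramanujan_sum d k = \prod_(q <- primes d) (if (q %| k)%N then (q - 1)%:R else -1).
Proof.
move=> d_gt0 sq_d; rewrite ramanujan_sum_coprime_pow_sum //.
exact: coprime_pow_sum_prim_root (prim_root_expi2pi d_gt0) sq_d.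
Qed.

Lemma ramanujan_sum_squarefree_neq0 d (k : nat) : (0 < d)%N -> squarefree d ->
  ramanujan_sum d k != 0.
Proof.
move=> d_gt0 sq_d; rewrite ramanujan_sum_squarefree // prodf_seq_neq0.
apply/allP => q; rewrite mem_primes => /and3P[q_pr _ _] /=.
by case: ifP; rewrite ?oppr_eq0 ?oner_eq0 // pnatr_eq0 subn_eq0 -ltnNge prime_gt1.
Qed.

Theorem mainTheorem9 (n d : nat) :
  (0 < n)%N -> (d %| n)%N -> (forall p : nat, (logn p d <= 1)%N) ->
  (forall k : nat, (k %| n)%N -> ramanujan_sum d k != 0) /\
  (forall s : nat,
     \sum_(k <- divisors n) (ramanujan_sum d k ^+ s)^-1 =
     \prod_(p <- primes n)
        ((logn p n)%:R / ((p - 1)%:R ^+ (logn p d * s))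
         + (-1) ^+ (logn p d * s)) :> R[i]).
Proof.
move=> n_gt0 d_n sq_d; have d_gt0 := dvdn_gt0 n_gt0 d_n.
pose ram_factor q e : R[i] := if (0 < e)%N then (q - 1)%:R else -1.
have ramanujan_sum_logn k : (k %| n)%N ->
    ramanujan_sum d k = \prod_(q <- primes n) ram_factor q (logn q k) ^+ logn q d.
  move=> k_n; rewrite ramanujan_sum_squarefree //.
  rewrite (prod_primes_squarefree _ n_gt0 d_n sq_d).
  apply: eq_big_seq => q; rewrite mem_primes => /and3P[q_pr _ _].
  by rewrite /ram_factor logn_gt0 mem_primes q_pr (dvdn_gt0 n_gt0 k_n).
split=> [k _|s]; first exact: ramanujan_sum_squarefree_neq0.
rewrite (eq_big_seq (fun k =>
    \prod_(q <- primes n) (ram_factor q (logn q k) ^+ (logn q d * s))^-1)); last first.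
  move=> k; rewrite -dvdn_divisors // => k_n; rewrite ramanujan_sum_logn //.
  by rewrite -prodrXl -prodfV; apply: eq_bigr => q _; rewrite exprM.
rewrite (sum_divisors_prod_logn (fun q e => (ram_factor q e ^+ (logn q d * s))^-1)) //.
by apply: eq_bigr => q _; apply: sum_ord_inv_expr_posN1.
Qed.
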